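(* Let $\kappa>0$, $\mu>0$, and set $\sigma=\sqrt{\mu/\kappa}$. Fix a real constant $K_1$ and a choice of sign (the same in each formula below). For $0<\tau<1/\mu$ define \[ \tilde q_0(x)=\sqrt2\,\sigma\,\mathrm{sech}\big(\sqrt{\mu(1-\mu\tau)}\,x\pm K_1\big), \] \[ \tilde q_1(x)=-\frac{\sqrt{2\mu}\,\sigma}{\sqrt{1-\mu\tau}}\,\mathrm{sech}\big(\sqrt{\mu(1-\mu\tau)}\,x\pm K_1\big)\tanh\big(\sqrt{\mu(1-\mu\tau)}\,x\pm K_1\big), \] which give standing solitary-wave solutions $e^{i\mu t}(\tilde q_0(x),\tilde q_1(x))$ of the NLSH system $i\partial_tq_0+\partial_xq_1=-\kappa|q_0|^2q_0$, $i\tau\partial_tq_1=\partial_xq_0-q_1$, and let \[ u^+(x)=\sqrt2\,\sigma\,\mathrm{sech}\big(\sqrt{\mu}\,x\pm K_1\big) \] (the amplitude of the bright-soliton ground state $e^{i\mu t}u^+(x)$ of the NLS equation $iu_t+u_{xx}+\kappa|u|^2u=0$). Then as $\tau\to0$, $\{\tilde q_0\}$ converges uniformly on $\mathbb{R}$ to $u^+$ at a rate linear in $\tau$, and $\{\tilde q_1\}$ converges uniformly on $\mathbb{R}$ to $(u^+)'$ at a rate linear in $\tau$.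
   Context: Standing-wave ansatz: $(q_0,q_1)(x,t)=e^{i\mu t}(\tilde q_0(x),\tilde q_1(x))$ with $\mu\in\mathbb{R}$, which reduces NLSH to $\tilde q_0'=(1-\mu\tau)\tilde q_1$, $\tilde q_1'=(\mu-\kappa\tilde q_0^2)\tilde q_0$. *)

From Stdlib Require Export Reals.
From Coquelicot Require Export Coquelicot.
Open Scope R_scope.

Definition sech (x : R) : R := / cosh x.

Definition sigma (kappa mu : R) : R := sqrt (mu / kappa).

(* the sign +/- is encoded by s in {1,-1}: argument is (... x + s * K1) *)
Definition q0t (kappa mu K1 s tau x : R) : R :=
  sqrt 2 * sigma kappa mu * sech (sqrt (mu * (1 - mu * tau)) * x + s * K1).

Definition q1t (kappa mu K1 s tau x : R) : R :=
  - (sqrt (2 * mu) * sigma kappa mu / sqrt (1 - mu * tau))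
    * sech (sqrt (mu * (1 - mu * tau)) * x + s * K1)
    * tanh (sqrt (mu * (1 - mu * tau)) * x + s * K1).

Definition uplus (kappa mu K1 s x : R) : R :=
  sqrt 2 * sigma kappa mu * sech (sqrt mu * x + s * K1).

From Pilot Require Import Defs.
From Stdlib Require Import Reals Lra.
From Coquelicot Require Import Coquelicot.
Open Scope R_scope.

(* With a = sqrt mu, r = sqrt (1 - mu tau), c = s K1 and A = sqrt 2 sigma, the
   profiles are q0 = A sech (a r x + c) and q1 = - (A a / r) (sech tanh) (a r x + c),
   while u+ = A sech (a x + c) and (u+)' = - A a (sech tanh) (a x + c).  Both sech
   and sech tanh have derivatives dominated by sech, and |y| sech y <= 2, so the mean
   value theorem in the scale parameter bounds h (a r x + c) - h (a x + c) by
   (1 - r) / r (2 + |c|) uniformly in x; finally (1 - r) / r <= 2 mu tau once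
   mu tau <= 1/2. *)

Lemma cosh_ge_1 y : 1 <= cosh y.
Proof.
  unfold cosh; pose proof (exp_ineq1_le y); pose proof (exp_ineq1_le (- y)); lra.
Qed.

Lemma cosh_sqr_sub_sinh_sqr y : cosh y ^ 2 - sinh y ^ 2 = 1.
Proof.
  unfold cosh, sinh; rewrite exp_Ropp; pose proof (exp_pos y); field; lra.
Qed.

Lemma Rabs_le_2_cosh y : Rabs y <= 2 * cosh y.
Proof.
  unfold cosh; pose proof (exp_ineq1_le y); pose proof (exp_ineq1_le (- y)).
  pose proof (exp_pos y); pose proof (exp_pos (- y)).
  unfold Rabs; destruct Rcase_abs; lra.
Qed.

Lemma sech_pos y : 0 < sech y.
Proof. apply Rinv_0_lt_compat; pose proof (cosh_ge_1 y); lra. Qed.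

Lemma sech_le_1 y : sech y <= 1.
Proof. rewrite <- Rinv_1; apply Rinv_le_contravar; [lra | apply cosh_ge_1]. Qed.

Lemma tanh_sqr_add_sech_sqr y : tanh y ^ 2 + sech y ^ 2 = 1.
Proof.
  unfold tanh, sech; pose proof (cosh_ge_1 y); pose proof (cosh_sqr_sub_sinh_sqr y).
  apply (Rmult_eq_reg_r (cosh y ^ 2)); [|nra].
  field_simplify; lra.
Qed.

Lemma Rabs_tanh_le_1 y : Rabs (tanh y) <= 1.
Proof.
  pose proof (tanh_sqr_add_sech_sqr y); pose proof (sech_pos y).
  apply Rabs_le; nra.
Qed.

Lemma Rabs_mul_sech_le_2 y : Rabs y * sech y <= 2.
Proof.
  pose proof (Rabs_le_2_cosh y); pose proof (cosh_ge_1 y).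
  unfold sech; apply (Rmult_le_reg_r (cosh y)); [lra|].
  field_simplify; lra.
Qed.

Lemma is_derive_sech y : is_derive sech y (- (sech y * tanh y)).
Proof.
  unfold sech, tanh, cosh, sinh; pose proof (exp_pos y); pose proof (exp_pos (- y)).
  auto_derive; [lra|]. rewrite exp_Ropp; field; nra.
Qed.

Lemma is_derive_sech_tanh y :
  is_derive (fun y => sech y * tanh y) y (sech y * (2 * sech y ^ 2 - 1)).
Proof.
  unfold sech, tanh, cosh, sinh; pose proof (exp_pos y); pose proof (exp_pos (- y)).
  auto_derive; [lra|]. rewrite exp_Ropp; field; nra.
Qed.

Lemma Rabs_sech_tanh_le_1 y : Rabs (sech y * tanh y) <= 1.
Proof.
  rewrite Rabs_mult, Rabs_pos_eq by (left; apply sech_pos).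
  pose proof (sech_le_1 y); pose proof (sech_pos y); pose proof (Rabs_tanh_le_1 y);
  pose proof (Rabs_pos (tanh y)); nra.
Qed.

Lemma Rabs_sech_tanh_le_sech y : Rabs (- (sech y * tanh y)) <= sech y.
Proof.
  rewrite Rabs_Ropp, Rabs_mult, (Rabs_pos_eq (sech y)) by (left; apply sech_pos).
  pose proof (sech_pos y); pose proof (Rabs_tanh_le_1 y); nra.
Qed.

Lemma Rabs_deriv_sech_tanh_le_sech y : Rabs (sech y * (2 * sech y ^ 2 - 1)) <= sech y.
Proof.
  rewrite Rabs_mult, (Rabs_pos_eq (sech y)) by (left; apply sech_pos).
  pose proof (sech_pos y); pose proof (sech_le_1 y).
  assert (Rabs (2 * sech y ^ 2 - 1) <= 1) by (apply Rabs_le; nra).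
  nra.
Qed.

Lemma Rabs_mul_sech_affine_le t c x :
  0 < t -> Rabs x * sech (t * x + c) <= (2 + Rabs c) / t.
Proof.
  intros Ht; set (y := t * x + c).
  assert (Hx : t * Rabs x <= Rabs y + Rabs c).
  { replace (t * Rabs x) with (Rabs (y - c)) by
      (unfold y; replace (t * x + c - c) with (t * x) by ring;
       rewrite Rabs_mult, Rabs_pos_eq by lra; reflexivity).
    unfold Rminus; rewrite <- (Rabs_Ropp c); apply Rabs_triang. }
  pose proof (Rabs_mul_sech_le_2 y); pose proof (sech_pos y); pose proof (sech_le_1 y).
  pose proof (Rabs_pos c).
  apply (Rmult_le_reg_l t); [lra|]. field_simplify; [|lra]. nra.
Qed.

Lemma Rabs_rescale_sub_le (h dh : R -> R) a b c x :
  (forall y, is_derive h y (dh y)) -> (forall y, Rabs (dh y) <= sech y) ->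
  0 < b <= a ->
  Rabs (h (b * x + c) - h (a * x + c)) <= (a - b) / b * (2 + Rabs c).
Proof.
  intros Hd Hb Hab.
  assert (Hdt : forall t, is_derive (fun t => h (t * x + c)) t (x * dh (t * x + c))).
  { intros t; apply (is_derive_comp h (fun t => t * x + c)); [apply Hd|].
    auto_derive; [easy | ring]. }
  destruct (MVT_gen (fun t => h (t * x + c)) b a (fun t => x * dh (t * x + c)))
    as [xi [Hxi Heq]].
  - intros t _; apply Hdt.
  - intros t _; apply continuity_pt_filterlim.
    apply (ex_derive_continuous (fun t => h (t * x + c))).
    eexists; apply Hdt.
  - rewrite Rmin_left, Rmax_right in Hxi by lra.
    rewrite Rabs_minus_sym, Heq, Rabs_mult, Rabs_mult, (Rabs_pos_eq (a - b)) by lra.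
    pose proof (Rabs_mul_sech_affine_le xi c x ltac:(lra)).
    pose proof (Hb (xi * x + c)); pose proof (Rabs_pos x); pose proof (Rabs_pos c).
    assert ((2 + Rabs c) / xi <= (2 + Rabs c) / b).
    { apply Rmult_le_compat_l; [lra|]. apply Rinv_le_contravar; lra. }
    assert (Rabs x * Rabs (dh (xi * x + c)) <= (2 + Rabs c) / b) by nra.
    unfold Rdiv in *; nra.
Qed.

Lemma Rabs_sech_rescale_sub_le a r c x :
  0 < a -> 0 < r <= 1 ->
  Rabs (sech (a * r * x + c) - sech (a * x + c)) <= (1 - r) / r * (2 + Rabs c).
Proof.
  intros Ha Hr.
  replace ((1 - r) / r) with ((a - a * r) / (a * r)) by (field; lra).
  apply (Rabs_rescale_sub_le sech (fun y => - (sech y * tanh y))).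
  - apply is_derive_sech.
  - apply Rabs_sech_tanh_le_sech.
  - nra.
Qed.

Lemma Rabs_sech_tanh_rescale_sub_le a r c x :
  0 < a -> 0 < r <= 1 ->
  Rabs (sech (a * r * x + c) * tanh (a * r * x + c) / r
        - sech (a * x + c) * tanh (a * x + c)) <= (1 - r) / r * (3 + Rabs c).
Proof.
  intros Ha Hr.
  set (g y := sech y * tanh y).
  assert (Hdiff : Rabs (g (a * r * x + c) - g (a * x + c)) <= (1 - r) / r * (2 + Rabs c)).
  { replace ((1 - r) / r) with ((a - a * r) / (a * r)) by (field; lra).
    apply (Rabs_rescale_sub_le g (fun y => sech y * (2 * sech y ^ 2 - 1))).
    - apply is_derive_sech_tanh.
    - apply Rabs_deriv_sech_tanh_le_sech.
    - nra. }
  assert (Hg : Rabs (g (a * r * x + c)) <= 1) by apply Rabs_sech_tanh_le_1.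
  assert (Hd : 0 <= (1 - r) / r) by (apply Rdiv_le_0_compat; lra).
  fold (g (a * r * x + c)) (g (a * x + c)).
  replace (g (a * r * x + c) / r - g (a * x + c))
    with (g (a * r * x + c) * ((1 - r) / r) + (g (a * r * x + c) - g (a * x + c)))
    by (field; lra).
  eapply Rle_trans; [apply Rabs_triang|].
  rewrite Rabs_mult, (Rabs_pos_eq ((1 - r) / r)) by exact Hd.
  nra.
Qed.

Lemma sqrt_one_sub_bounds e : 0 <= e < 1 -> 0 < sqrt (1 - e) <= 1.
Proof.
  intros He; split; [apply sqrt_lt_R0; lra|].
  apply Rle_trans with (sqrt 1); [apply sqrt_le_1_alt; lra | rewrite sqrt_1; lra].
Qed.

Lemma one_sub_sqrt_one_sub_div_bounds e :
  0 <= e <= 1 / 2 -> 0 <= (1 - sqrt (1 - e)) / sqrt (1 - e) <= 2 * e.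
Proof.
  intros He; set (r := sqrt (1 - e)).
  assert (Hrr : r * r = 1 - e) by (apply sqrt_sqrt; lra).
  assert (Hr : 0 < r <= 1) by (apply sqrt_one_sub_bounds; lra).
  split; [apply Rdiv_le_0_compat; lra|].
  apply (Rmult_le_reg_r r); [lra|]. field_simplify; nra.
Qed.

Lemma is_derive_uplus kappa mu K1 s x :
  is_derive (uplus kappa mu K1 s) x
    (- (sqrt 2 * Defs.sigma kappa mu * sqrt mu)
       * (sech (sqrt mu * x + s * K1) * tanh (sqrt mu * x + s * K1))).
Proof.
  unfold uplus.
  replace (- _ * _) with (sqrt 2 * Defs.sigma kappa mu
    * (sqrt mu * - (sech (sqrt mu * x + s * K1) * tanh (sqrt mu * x + s * K1)))) by ring.
  apply is_derive_scal, (is_derive_comp sech (fun x => sqrt mu * x + s * K1)).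
  - apply is_derive_sech.
  - auto_derive; [easy | ring].
Qed.

Section Rescaling.

Variables (kappa mu K1 s tau x : R).
Hypotheses (Hmu : 0 < mu) (Htau : 0 <= tau) (Hmutau : mu * tau < 1).

Let r := sqrt (1 - mu * tau).

Let sqrt_mu_mul_one_sub : sqrt (mu * (1 - mu * tau)) = sqrt mu * r.
Proof. apply sqrt_mult; nra. Qed.

Let r_bounds : 0 < r <= 1.
Proof. apply sqrt_one_sub_bounds; split; nra. Qed.

Lemma Rabs_q0t_sub_uplus :
  Rabs (q0t kappa mu K1 s tau x - uplus kappa mu K1 s x)
    <= sqrt 2 * Defs.sigma kappa mu * ((1 - r) / r * (2 + Rabs (s * K1))).
Proof.
  unfold q0t, uplus; rewrite sqrt_mu_mul_one_sub, <- Rmult_minus_distr_l, Rabs_mult.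
  rewrite Rabs_pos_eq by (apply Rmult_le_pos; apply sqrt_pos).
  apply Rmult_le_compat_l; [apply Rmult_le_pos; apply sqrt_pos|].
  apply Rabs_sech_rescale_sub_le; [apply sqrt_lt_R0; lra | exact r_bounds].
Qed.

Lemma Rabs_q1t_sub_Derive_uplus :
  Rabs (q1t kappa mu K1 s tau x - Derive (uplus kappa mu K1 s) x)
    <= sqrt 2 * Defs.sigma kappa mu * sqrt mu * ((1 - r) / r * (3 + Rabs (s * K1))).
Proof.
  pose proof r_bounds.
  assert (HA : 0 <= sqrt 2 * Defs.sigma kappa mu * sqrt mu)
    by (apply Rmult_le_pos; [apply Rmult_le_pos|]; apply sqrt_pos).
  rewrite (is_derive_unique _ _ _ (is_derive_uplus kappa mu K1 s x)).
  unfold q1t; rewrite sqrt_mu_mul_one_sub, sqrt_mult by lra; fold r.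
  set (b := sqrt mu * r * x + s * K1); set (a := sqrt mu * x + s * K1).
  replace (_ - _) with (- (sqrt 2 * Defs.sigma kappa mu * sqrt mu)
      * (sech b * tanh b / r - sech a * tanh a)) by (field; lra).
  rewrite Rabs_mult, Rabs_Ropp, Rabs_pos_eq by exact HA.
  apply Rmult_le_compat_l; [exact HA|].
  apply Rabs_sech_tanh_rescale_sub_le; [apply sqrt_lt_R0; lra | assumption].
Qed.

End Rescaling.

Theorem proposition2 (kappa mu K1 s : R) :
  0 < kappa -> 0 < mu -> (s = 1 \/ s = -1) ->
  exists C tau0 : R, 0 < tau0 /\
    forall tau : R, 0 < tau -> tau < tau0 -> tau < / mu ->
      forall x : R,
        Rabs (q0t kappa mu K1 s tau x - uplus kappa mu K1 s x) <= C * tau /\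
        Rabs (q1t kappa mu K1 s tau x - Derive (uplus kappa mu K1 s) x) <= C * tau.
Proof.
  intros _ Hmu _.
  set (A := sqrt 2 * Defs.sigma kappa mu); set (a := sqrt mu); set (k := 3 + Rabs (s * K1)).
  assert (HA : 0 <= A) by (apply Rmult_le_pos; apply sqrt_pos).
  assert (Ha : 0 <= a) by apply sqrt_pos.
  assert (Hk : 0 <= 2 + Rabs (s * K1) <= k) by (pose proof (Rabs_pos (s * K1)); unfold k; lra).
  exists (2 * mu * (A * (1 + a) * k)), (/ (2 * mu)); split; [apply Rinv_0_lt_compat; lra|].
  intros tau Htau Htau0 _ x.
  assert (Hmutau : 0 <= mu * tau <= 1 / 2).
  { apply (Rmult_lt_compat_l mu) in Htau0; [|lra].
    replace (mu * / (2 * mu)) with (1 / 2) in Htau0 by (field; lra). nra. }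
  destruct (one_sub_sqrt_one_sub_div_bounds (mu * tau) Hmutau) as [Hdelta0 Hdelta].
  pose proof (Rabs_q0t_sub_uplus kappa mu K1 s tau x Hmu ltac:(lra) ltac:(lra)) as H0.
  pose proof (Rabs_q1t_sub_Derive_uplus kappa mu K1 s tau x Hmu ltac:(lra) ltac:(lra)) as H1.
  set (delta := (1 - sqrt (1 - mu * tau)) / sqrt (1 - mu * tau)) in *; fold A a k in H0, H1.
  replace (2 * mu * (A * (1 + a) * k) * tau) with (A * (1 + a) * k * (2 * (mu * tau))) by ring.
  assert (HB : A * (1 + a) * k * delta <= A * (1 + a) * k * (2 * (mu * tau)))
    by (apply Rmult_le_compat_l; [apply Rmult_le_pos; [apply Rmult_le_pos|]|]; lra).
  assert (HAdelta : 0 <= A * delta) by (apply Rmult_le_pos; lra).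
  assert (0 <= A * delta * k) by (apply Rmult_le_pos; lra).
  assert (0 <= A * delta * a * k) by (apply Rmult_le_pos; [apply Rmult_le_pos|]; lra).
  assert (A * delta * (2 + Rabs (s * K1)) <= A * delta * k) by (apply Rmult_le_compat_l; lra).
  split; [eapply Rle_trans; [exact H0|] | eapply Rle_trans; [exact H1|]]; lra.
Qed.
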